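(* For every $n\ge 3$ with $n\ne 4$, the wheel $W_n$ is distance antimagic; the wheel $W_4$ is not distance antimagic.
   Context: The wheel $W_n$ ($n\ge3$) is obtained from a cycle $x_1x_2\cdots x_nx_1$ by adding a center vertex $x_0$ adjacent to all $x_1,\dots,x_n$; it has $n+1$ vertices. For a graph $G=(V,E)$ with $v=|V|$ and a bijection $f:V\to\{1,\dots,v\}$, the vertex-weight of $x$ is $w(x)=\sum_{y\in N(x)}f(y)$ with $N(x)$ the set of neighbours of $x$. $G$ is distance antimagic if it admits a bijection $f$ under which all vertex-weights are pairwise distinct. *)

From mathcomp Require Import all_boot.
Set Implicit Arguments. Unset Strict Implicit. Unset Printing Implicit Defensive.

Definition vweight (T : finType) (adj : rel T) (f : T -> nat) (x : T) : nat :=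
  \sum_(y : T | adj x y) f y.

Definition labeling (T : finType) (f : T -> nat) : Prop :=
  injective f /\ (forall x, 0 < f x <= #|T|).

Definition distance_antimagic (T : finType) (adj : rel T) : Prop :=
  exists f : T -> nat, labeling f /\ injective (vweight adj f).

(* Wheel W_n on vertices 'I_n.+1: 0 is the centre x_0, i in 1..n is x_i,
   the rim cycle is x_1 x_2 ... x_n x_1. *)
Definition rim_adj (n : nat) (i j : nat) : bool :=
  [|| i.+1 == j, j.+1 == i, (i == 1) && (j == n) | (i == n) && (j == 1)].

Definition wheel_adj (n : nat) : rel 'I_n.+1 :=
  fun x y => (x != y) &&
    [|| val x == 0, val y == 0 | rim_adj n (val x) (val y)].
Arguments wheel_adj : clear implicits.
Arguments rim_adj : clear implicits.

From mathcomp Require Import all_boot zify.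

Set Implicit Arguments.
Unset Strict Implicit.
Unset Printing Implicit Defensive.

(* A rim vertex x_i of W_n (n >= 3) has exactly three neighbours, the centre
   x_0 and its two rim neighbours x_(i-1), x_(i+1), so its weight is
   f x_0 + f x_(i-1) + f x_(i+1).  The centre is adjacent to the whole rim.
   - W_4 is not distance antimagic: x_1 and x_3 have the same neighbourhood,
     and in any graph two distinct vertices with equal neighbourhoods ("twins")
     always receive equal weights.
   - For n <> 4 we give the centre the label 1.  Then the centre weight exceeds
     every rim weight (it dominates the labels of x_i, x_(i-1), x_(i+1) and
     f x_i > 1 = f x_0), so it only remains to make the sums
     f x_(i-1) + f x_(i+1) pairwise distinct along the rim
     (wheel_distance_antimagic_criterion).  For odd n the natural labeling
     x_k |-> k+1 works; for even n >= 6 the same labeling with the labels of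
     x_1 and x_n exchanged works. *)

Lemma vweight_uniq_nbhd (T : finType) (adj : rel T) (f : T -> nat) x (s : seq T) :
  uniq s -> adj x =i s -> vweight adj f x = \sum_(y <- s) f y.
Proof. by move=> uniq_s nbhd; rewrite big_uniq //; apply: eq_bigl. Qed.

Lemma vweight_ge_uniq (T : finType) (adj : rel T) (f : T -> nat) x (s : seq T) :
  uniq s -> {subset s <= adj x} -> \sum_(y <- s) f y <= vweight adj f x.
Proof.
move=> uniq_s sub_s; rewrite big_uniq // /vweight [X in _ <= X](bigID (mem s)) /=.
apply/(leq_trans _ (leq_addr _ _))/eq_leq/eq_bigl => y.
by apply/idP/andP => [s_y|[]] //; split; [apply: sub_s|].
Qed.

(* Twins always have equal weights, so a graph with twins is not distance
   antimagic. *)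
Lemma twins_not_distance_antimagic (T : finType) (adj : rel T) (x y : T) :
  x != y -> adj x =1 adj y -> ~ distance_antimagic adj.
Proof. by move=> /eqP x_neq_y twins [f [_ inj_w]]; apply/x_neq_y/inj_w/eq_bigl. Qed.

(* The rim vertices x_1 and x_3 of W_4 are twins (both see x_0, x_2, x_4). *)
Lemma wheel4_twins : wheel_adj 4 (inord 1) =1 wheel_adj 4 (inord 3).
Proof. by case=> [[|[|[|[|[|m]]]]] lt_m5]; rewrite /wheel_adj -!val_eqE /= !inordK. Qed.

Definition rim_prev (n i : nat) : nat := if i == 1 then n else i.-1.
Definition rim_next (n i : nat) : nat := if i == n then 1 else i.+1.

Ltac rim_arith := rewrite /rim_prev /rim_next; repeat case: ifP => /eqP ?; lia.

Lemma rim_prev_bound n i : 0 < i <= n -> 0 < rim_prev n i <= n.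
Proof. by rim_arith. Qed.

Lemma rim_next_bound n i : 0 < i <= n -> 0 < rim_next n i <= n.
Proof. by rim_arith. Qed.

Lemma wheel_rim_bound n (x : 'I_n.+1) : x != ord0 -> 0 < x <= n.
Proof. by move: (ltn_ord x); rewrite -val_eqE /=; lia. Qed.

Section WheelRim.
Variables (n : nat) (x : 'I_n.+1).
Hypotheses (n_gt2 : 2 < n) (x_rim : x != ord0).

Let x_bound : 0 < x <= n. Proof. exact: wheel_rim_bound. Qed.

Let prev_bound : 0 < rim_prev n x <= n. Proof. exact: rim_prev_bound. Qed.
Let next_bound : 0 < rim_next n x <= n. Proof. exact: rim_next_bound. Qed.

Let inord_prev : nat_of_ord (inord (rim_prev n x) : 'I_n.+1) = rim_prev n x.
Proof. by rewrite inordK // ltnS; case/andP: prev_bound. Qed.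
Let inord_next : nat_of_ord (inord (rim_next n x) : 'I_n.+1) = rim_next n x.
Proof. by rewrite inordK // ltnS; case/andP: next_bound. Qed.

Lemma wheel_rim_nbhd :
  wheel_adj n x =i [:: ord0; inord (rim_prev n x); inord (rim_next n x)].
Proof.
case=> j lt_j; rewrite -topredE !inE /wheel_adj /rim_adj /= -!val_eqE /=.
rewrite inord_prev inord_next; move: x_bound prev_bound next_bound; rim_arith.
Qed.

Lemma wheel_rim_nbhd_uniq :
  uniq [:: ord0 : 'I_n.+1; inord (rim_prev n x); inord (rim_next n x)].
Proof.
rewrite /= !inE -!val_eqE /= inord_prev inord_next.
move: x_bound prev_bound next_bound; rim_arith.
Qed.

Lemma wheel_rim_triple_uniq : uniq [:: x; inord (rim_prev n x); inord (rim_next n x)].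
Proof.
rewrite /= !inE -!val_eqE /= inord_prev inord_next.
move: x_bound prev_bound next_bound; rim_arith.
Qed.

Lemma wheel_rim_weight (f : 'I_n.+1 -> nat) : vweight (wheel_adj n) f x =
  f ord0 + (f (inord (rim_prev n x)) + f (inord (rim_next n x))).
Proof.
by rewrite (vweight_uniq_nbhd _ wheel_rim_nbhd_uniq wheel_rim_nbhd) !big_cons big_nil addn0.
Qed.

Lemma wheel_center_weight_gt (f : 'I_n.+1 -> nat) :
  f ord0 < f x -> vweight (wheel_adj n) f x < vweight (wheel_adj n) f ord0.
Proof.
move=> f0_lt_fx; rewrite wheel_rim_weight.
apply: leq_trans (vweight_ge_uniq f wheel_rim_triple_uniq _).
  by rewrite !big_cons big_nil addn0 ltn_add2r.
move=> y; rewrite !inE => /or3P[] /eqP->; rewrite -topredE /= /wheel_adj -val_eqE /=;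
  rewrite ?inord_prev ?inord_next; move: x_bound prev_bound next_bound; lia.
Qed.

End WheelRim.

Lemma wheel_distance_antimagic_criterion n (g : nat -> nat) : 2 < n ->
  {in [pred k | k <= n] &, injective g} ->
  (forall k, k <= n -> 0 < g k <= n.+1) -> g 0 = 1 ->
  {in [pred i | 0 < i <= n] &,
    injective (fun i => g (rim_prev n i) + g (rim_next n i))} ->
  distance_antimagic (wheel_adj n).
Proof.
move=> n_gt2 g_inj g_range g0 rim_sum_inj.
pose f (x : 'I_n.+1) := g x.
have x_le_n (x : 'I_n.+1) : x <= n by rewrite -ltnS.
have center_min (x : 'I_n.+1) : x != ord0 -> f ord0 < f x.
  move=> x_rim; have /andP[gx_pos _] := g_range _ (x_le_n x).
  rewrite /f /= g0 ltn_neqAle gx_pos andbT -g0.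
  apply: contra x_rim => /eqP g0_gx; rewrite -val_eqE /=.
  by apply/eqP/esym/g_inj; rewrite ?inE.
have rim_weight (x : 'I_n.+1) : x != ord0 ->
    vweight (wheel_adj n) f x = f ord0 + (g (rim_prev n x) + g (rim_next n x)).
  move=> x_rim; rewrite wheel_rim_weight // /f /= !inordK // ltnS;
  by move: (wheel_rim_bound x_rim) => /[dup] /rim_prev_bound + /rim_next_bound; lia.
exists f; split.
  split=> [x y /g_inj eq_xy|x]; last by rewrite card_ord g_range.
  by apply/val_inj/eq_xy; rewrite inE.
move=> x y; have [->|x_rim] := eqVneq x ord0; have [->|y_rim] := eqVneq y ord0 => // w_eq.
- by move: (wheel_center_weight_gt n_gt2 y_rim (center_min y y_rim)); rewrite w_eq ltnn.
- by move: (wheel_center_weight_gt n_gt2 x_rim (center_min x x_rim)); rewrite w_eq ltnn.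
move: w_eq; rewrite !rim_weight // => /addnI /rim_sum_inj eq_xy.
by apply/val_inj/eq_xy; rewrite inE wheel_rim_bound.
Qed.

(* Odd n: the natural labeling x_k |-> k+1.  The rim sums are 2i+2 for
   1 < i < n, which are even, and n+4, n+2 for i = 1, n, which are odd. *)
Lemma odd_wheel_distance_antimagic n :
  odd n -> 2 < n -> distance_antimagic (wheel_adj n).
Proof.
move=> n_odd n_gt2; apply: (@wheel_distance_antimagic_criterion _ (fun k => k.+1)) => //.
- by move=> i j _ _ [].
- by move=> i j; rewrite !inE; move: n_odd; rim_arith.
Qed.

Definition swapped_label (n k : nat) : nat :=
  if k == 1 then n.+1 else if k == n then 2 else k.+1.

(* Even n >= 6: under swapped_label the rim sums are 2i+2 for 2 < i < n-1,
   which are even, and 5, n+5, n+1, 2n+1 for i = 1, 2, n-1, n, which are odd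
   and pairwise distinct exactly when n <> 4. *)
Lemma even_wheel_distance_antimagic n :
  ~~ odd n -> 4 < n -> distance_antimagic (wheel_adj n).
Proof.
move=> n_even n_gt4; apply: (@wheel_distance_antimagic_criterion _ (swapped_label n)).
- by apply: leq_trans n_gt4.
- by move=> i j; rewrite !inE /swapped_label; repeat case: ifP => /eqP ?; lia.
- by move=> k; rewrite /swapped_label; repeat case: ifP => /eqP ?; lia.
- by rewrite /swapped_label; case: ifP => /eqP ?; lia.
- move=> i j; rewrite !inE /rim_prev /rim_next.
  by repeat case: ifP => /eqP ?; rewrite /swapped_label /=; repeat case: ifP => /eqP ?; lia.
Qed.

Theorem mainTheorem12 :
  (forall n : nat, 3 <= n -> n != 4 -> distance_antimagic (wheel_adj n)) /\
  ~ distance_antimagic (wheel_adj 4).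
Proof.
split; last first.
  by apply: (twins_not_distance_antimagic _ wheel4_twins); rewrite -val_eqE /= !inordK.
move=> n n_ge3 n_neq4; have [n_odd|n_even] := boolP (odd n).
  exact: odd_wheel_distance_antimagic.
by apply: even_wheel_distance_antimagic; move: n_even n_neq4; lia.
Qed.
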